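(* Let $G=(V,E)$ be an undirected graph (possibly with non-negative edge weights) such that the set $\mathcal{D}=\{(u,v)\in V\times V: u\ne v\}$ can be partitioned into a class $A=\{(u^*,v^* )\}$ consisting of a single pair of distinct nodes with $\sigma_{u^*v^*}\le 2$, and a class $B=\mathcal{D}\setminus A$ of pairs $(u,v)$ with $\sigma_{uv}\le1$. Then the pseudodimension of the family $\{f_w:\mathcal{D}\to[0,1],\ w\in V\}$ is at most $3$.
   Context: $\sigma_{uv}$ is the number of shortest paths from $u$ to $v$; $\sigma_{uv}(w)$ is the number of those to which $w$ is internal ($w\ne u$, $w\ne v$, and the path goes through $w$). $f_w(u,v)=\sigma_{uv}(w)/\sigma_{uv}$, taken to be $0$ if $\sigma_{uv}=0$. Pseudodimension: for a family $\mathcal{F}$ of functions from a domain $D$ to $[0,1]$, let $R_f=\{(x,t)\in D\times[0,1]: t\le f(x)\}$ and $\mathcal{F}^+=\{R_f: f\in\mathcal{F}\}$. A set $A\subseteq D\times[0,1]$ is shattered by $\mathcal{F}^+$ if $\{R\cap A: R\in\mathcal{F}^+\}=2^A$. The pseudodimension of $\mathcal{F}$ is the largest size of a subset of $D\times[0,1]$ shattered by $\mathcal{F}^+$ (the VC-dimension of $\mathcal{F}^+$). *)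

From mathcomp Require Import all_boot all_order all_algebra.
Set Implicit Arguments. Unset Strict Implicit. Unset Printing Implicit Defensive.
Import Order.TTheory GRing.Theory Num.Theory.
Local Open Scope ring_scope.

Section Paths.
Variables (R : realFieldType) (V : finType) (e : rel V) (wt : V -> V -> R).

Definition is_upath (u v : V) (s : seq V) : bool :=
  match s with
  | [::] => false
  | x :: p => [&& x == u, last x p == v, path e x p & uniq s]
  end.

Definition pweight (s : seq V) : R :=
  match s with
  | [::] => 0
  | x :: p => \sum_(ab <- zip (x :: p) p) wt ab.1 ab.2
  end.

(* s is a shortest u-v path: a simple u-v path of weight <= every simple
   u-v path (simple paths have at most #|V| vertices) *)
Definition is_shortest (u v : V) (s : seq V) : bool :=
  is_upath u v s &&
  [forall n : 'I_#|V|.+1, forall t : n.-tuple V,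
     is_upath u v t ==> (pweight s <= pweight t)].

Definition sigma (u v : V) : nat :=
  \sum_(n < #|V|.+1) #|[pred t : n.-tuple V | is_shortest u v t]|.

Definition sigma_via (u v w : V) : nat :=
  \sum_(n < #|V|.+1)
    #|[pred t : n.-tuple V | [&& is_shortest u v t, w \in (t : seq V),
                                 w != u & w != v]]|.

Definition fbc (w : V) (uv : V * V) : R :=
  if sigma uv.1 uv.2 == 0%N then 0
  else (sigma_via uv.1 uv.2 w)%:R / (sigma uv.1 uv.2)%:R.

Definition shattered (A : seq ((V * V) * R)) : Prop :=
  uniq A /\
  (forall a, a \in A -> a.1.1 != a.1.2 /\ 0 <= a.2 <= 1) /\
  (forall S : seq ((V * V) * R), {subset S <= A} ->
     exists w : V, forall a, a \in A -> (a \in S) = (a.2 <= fbc w a.1)).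

Definition pdim_le (d : nat) : Prop :=
  forall A, shattered A -> (size A <= d)%N.

End Paths.

From mathcomp Require Import all_boot all_order all_algebra.
Set Implicit Arguments. Unset Strict Implicit. Unset Printing Implicit Defensive.
Import Order.TTheory GRing.Theory Num.Theory.
Local Open Scope ring_scope.

(* Under the hypotheses every pair of distinct nodes is joined by a unique shortest path
   P_uv, so f_w(u,v) is 1 if w is internal to P_uv and 0 otherwise; a shattered set thus
   has positive thresholds and is shattered by the sets {(u,v) | w internal to P_uv}.
   Subpaths of shortest paths are shortest, so if x and z are internal to P_uv, so is
   every node of P_xz. Now suppose pairs p_0, ..., p_3 were shattered: some w is internal
   to all four paths and, for each k, some x_k is internal to all of them except P_{p_k}.
   Two of x_1, x_2, x_3 lie on the same side of w along P_{p_0}, say in the order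
   w, x_k, x_l. Then x_k lies on P_{w x_l}, and w and x_l are internal to P_{p_k}, so
   x_k is internal to P_{p_k}: a contradiction. *)

Section WalkWeight.
Variables (R : numDomainType) (T : Type) (wt : T -> T -> R).

Fixpoint walk_weight (s : seq T) : R :=
  if s is x :: ((y :: _) as t) then wt x y + walk_weight t else 0.

Lemma walk_weight_cons2 x y s : walk_weight [:: x, y & s] = wt x y + walk_weight (y :: s).
Proof. by []. Qed.

Lemma walk_weight_cat x s t :
  walk_weight (x :: s ++ t) = walk_weight (x :: s) + walk_weight (last x s :: t).
Proof.
elim: s x => [|y s IH] x; first by rewrite add0r.
by rewrite cat_cons !walk_weight_cons2 IH addrA.
Qed.

Lemma walk_weight_cat_rcons s y t :
  walk_weight (s ++ y :: t) = walk_weight (rcons s y) + walk_weight (y :: t).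
Proof.
case: s => [|x s]; first by rewrite add0r.
by rewrite -cat_rcons rcons_cons walk_weight_cat last_rcons.
Qed.

Lemma walk_weight_ge0 : (forall x y, 0 <= wt x y) -> forall s, 0 <= walk_weight s.
Proof. by move=> wt_ge0; elim=> [|x [|y s] IH] //=; rewrite addr_ge0. Qed.

Lemma walk_weight_rev : (forall x y, wt x y = wt y x) ->
  forall s, walk_weight (rev s) = walk_weight s.
Proof.
move=> wt_sym; elim=> [|x [|y s] IH] //.
rewrite rev_cons rev_cons -!cats1 -catA walk_weight_cat_rcons -rev_cons IH.
by rewrite walk_weight_cons2 /= addr0 wt_sym addrC.
Qed.

End WalkWeight.

Arguments walk_weight {R T} wt s : simpl never.

Section TupleCount.
Variables (T : finType) (N : nat) (P : pred (seq T)).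

(* [sigma] and [sigma_via] are instances of [tuple_count], up to conversion. *)
Definition tuple_count : nat := \sum_(n < N.+1) #|[pred t : n.-tuple T | P t]|.

Lemma tuple_count_gt0P :
  reflect (exists2 s, P s & (size s <= N)%N) (0 < tuple_count)%N.
Proof.
apply: (iffP idP) => [|[s Ps le_sN]].
  rewrite lt0n sum_nat_eq0 negb_forall => /existsP[n].
  rewrite /= -lt0n => /card_gt0P[t]; rewrite inE => Pt.
  by exists t; rewrite // size_tuple -ltnS.
rewrite /tuple_count (bigD1 (Ordinal (le_sN : size s < N.+1)%N)) //=.
apply: leq_trans (leq_addr _ _); apply/card_gt0P.
by exists (in_tuple s); rewrite inE.
Qed.

Lemma tuple_count_gt1 s1 s2 : P s1 -> P s2 -> s1 != s2 ->
  (size s1 <= N)%N -> (size s2 <= N)%N -> (1 < tuple_count)%N.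
Proof.
move=> Ps1 Ps2 s12 le1 le2.
set n1 := Ordinal (le1 : size s1 < N.+1)%N; set n2 := Ordinal (le2 : size s2 < N.+1)%N.
have [eq_n|ne_n] := eqVneq n1 n2.
  have sz2 : size s2 == size s1 by move/(congr1 val): eq_n => /= ->.
  rewrite /tuple_count (bigD1 n1) //=; apply: leq_trans (leq_addr _ _).
  apply/card_gt1P; exists (in_tuple s1), (Tuple sz2).
  by split; rewrite ?inE.
rewrite /tuple_count (bigD1 n1) //= (bigD1 n2) 1?eq_sym //= addnA -add1n.
apply: leq_trans (leq_addr _ _); apply: leq_add; apply/card_gt0P.
  by exists (in_tuple s1); rewrite inE.
by exists (in_tuple s2); rewrite inE.
Qed.

End TupleCount.

Section ShortestPaths.
Variables (R : realFieldType) (V : finType) (e : rel V) (wt : V -> V -> R).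
Hypotheses (e_sym : symmetric e) (wt_sym : forall x y, wt x y = wt y x)
  (wt_ge0 : forall x y, 0 <= wt x y).

Local Notation weight := (walk_weight wt).
Local Notation upath := (is_upath e).
Local Notation shortest := (is_shortest e wt).

Lemma pweightE s : pweight wt s = weight s.
Proof.
case: s => // x p; rewrite /pweight.
by elim: p x => [|y p IH] x; rewrite ?big_nil // big_cons IH.
Qed.

Lemma upath_size u v s : upath u v s -> (size s <= #|V|)%N.
Proof. by case: s => // x p /and4P[_ _ _ /card_uniqP <-]; apply: max_card. Qed.

Lemma upath_rev u v s : upath u v s -> upath v u (rev s).
Proof.
case: s => // x p /and4P[/eqP-> /eqP <-].
case/lastP: p => [|p y] pth uniq_s; first by rewrite /= eqxx.
have rev_s : rev (u :: rcons p y) = y :: rcons (rev p) u.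
  by rewrite rev_cons rev_rcons.
rewrite last_rcons rev_s /is_upath; apply/and4P; split; rewrite ?last_rcons //.
- have := rev_path e u (rcons p y); rewrite belast_rcons last_rcons rev_cons => ->.
  by rewrite (@eq_path _ _ e) // => a b; apply: e_sym.
- by rewrite -rev_s rev_uniq.
Qed.

Lemma shortestP u v s : reflect
  (upath u v s /\ forall t, upath u v t -> weight s <= weight t) (shortest u v s).
Proof.
apply: (iffP andP) => [[us /forallP min_s]|[us min_s]]; split=> //.
  move=> t ut; have := min_s (Ordinal (upath_size ut : size t < #|V|.+1)%N).
  by move=> /forallP/(_ (in_tuple t))/implyP/(_ ut); rewrite !pweightE.
by apply/forallP=> n; apply/forallP=> t; apply/implyP=> ut; rewrite !pweightE min_s.
Qed.

Lemma shortest_upath u v s : shortest u v s -> upath u v s.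
Proof. by case/shortestP. Qed.

Lemma shortest_rev u v s : shortest u v s -> shortest v u (rev s).
Proof.
case/shortestP=> us min_s; apply/shortestP; split=> [|t vt]; first exact: upath_rev.
by rewrite walk_weight_rev // -(walk_weight_rev wt_sym t) min_s // upath_rev.
Qed.

Lemma path_shortcut x p : path e x p -> exists s,
  [/\ upath x (last x p) s, {subset s <= x :: p} & weight s <= weight (x :: p)].
Proof.
have [n] := ubnP (size p); elim: n => // n IH in x p *; rewrite ltnS => le_pn pth.
have [xp|xNp] := boolP (x \in p).
  case/splitPr: xp le_pn pth => p1 p2 le_pn; rewrite cat_path /= => /and3P[_ _ pth2].
  have [|s [xs sub_s le_s]] := IH x p2 _ pth2.
    by apply: leq_trans le_pn; rewrite size_cat /= addnS ltnS leq_addl.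
  exists s; split; first by rewrite last_cat.
    by move=> z /sub_s zs; rewrite inE mem_cat zs !orbT.
  apply: le_trans le_s _; rewrite walk_weight_cat walk_weight_cons2 addrA lerDr.
  by rewrite addr_ge0 ?walk_weight_ge0.
case: p le_pn pth xNp => [_ _ _|y q le_qn].
  by exists [:: x]; split=> //; rewrite /is_upath /= eqxx.
case/andP=> exy pth xNq; have [s [ys sub_s le_s]] := IH y q le_qn pth.
case: s ys sub_s le_s => // y' s /and4P[/eqP-> ys pths uniq_s] sub_s le_s.
exists [:: x, y & s]; split.
- rewrite /is_upath; apply/and4P; split=> //; first by rewrite /= exy.
  by rewrite cons_uniq uniq_s andbT; exact: contra (sub_s x) xNq.
- by move=> z /predU1P[->|/sub_s zq]; rewrite inE ?eqxx ?zq ?orbT.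
- by rewrite !walk_weight_cons2 lerD2l.
Qed.

Lemma shortest_prefix u v p q :
  shortest u v (u :: p ++ q) -> shortest u (last u p) (u :: p).
Proof.
case/shortestP=> /and4P[_ /eqP uv]; rewrite cat_path -cat_cons cat_uniq.
case/andP=> pth_p pth_q /and3P[uniq_p _ _] min_s.
apply/shortestP; split=> [|t]; first by rewrite /is_upath !eqxx pth_p uniq_p.
case: t => // x t /and4P[/eqP-> /eqP lt pth_t _]; rewrite leNgt; apply/negP => lt_t.
have [|s [us _ le_s]] := @path_shortcut u (t ++ q); first by rewrite cat_path pth_t lt.
rewrite last_cat lt -last_cat uv in us; have := min_s s us.
apply/negP; rewrite -ltNge; apply: le_lt_trans le_s _.
by rewrite !walk_weight_cat lt ltrD2r.
Qed.

Lemma shortest_suffix u v p x q : shortest u v (p ++ x :: q) -> shortest x v (x :: q).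
Proof.
move/shortest_rev; rewrite rev_cat rev_cons.
case def_r: (rcons (rev q) x) => [|y r]; first by case: (rev q) def_r.
have ry : last y r = x by rewrite -[last y r]/(last v (y :: r)) -def_r last_rcons.
move=> hs; have yv : y = v by case/shortestP: hs => /and4P[/eqP].
move: hs; rewrite yv => /shortest_prefix/shortest_rev.
by rewrite -yv ry -def_r rev_rcons revK.
Qed.

Lemma shortest_infix u v p x m q :
  shortest u v (p ++ x :: m ++ q) -> shortest x (last x m) (x :: m).
Proof. by move/shortest_suffix/shortest_prefix. Qed.

Lemma shortest_unique_of_sigma_le1 u v s1 s2 : (sigma e wt u v <= 1)%N ->
  shortest u v s1 -> shortest u v s2 -> s1 = s2.
Proof.
move=> le1 h1 h2; apply/eqP; apply: contraTT le1 => ne; rewrite -ltnNge.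
have size_le t : shortest u v t -> (size t <= #|V|)%N by move/shortest_upath/upath_size.
exact: tuple_count_gt1 h1 h2 ne (size_le _ h1) (size_le _ h2).
Qed.

Definition unique_shortest_paths := forall u v s1 s2,
  u != v -> shortest u v s1 -> shortest u v s2 -> s1 = s2.

Lemma unique_shortest_paths_from_sigma us vs : us != vs ->
  (forall u v, u != v -> (u, v) != (us, vs) -> (sigma e wt u v <= 1)%N) ->
  unique_shortest_paths.
Proof.
move=> neq_uv sigma_le1 u v s1 s2 uv h1 h2.
have [[eu ev]|ne] := eqVneq (u, v) (us, vs); last first.
  exact: shortest_unique_of_sigma_le1 (sigma_le1 _ _ uv ne) h1 h2.
apply: (can_inj revK); apply: shortest_unique_of_sigma_le1 (shortest_rev h1) (shortest_rev h2).
apply: sigma_le1; first by rewrite eq_sym.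
by rewrite eu ev; apply: contra neq_uv => /eqP[->].
Qed.

Definition internal (p : V * V) (w : V) : bool := (0 < sigma_via e wt p.1 p.2 w)%N.

Lemma internalP p w : reflect
  (exists s, [/\ shortest p.1 p.2 s, w \in s, w != p.1 & w != p.2]) (internal p w).
Proof.
pose P s := [&& shortest p.1 p.2 s, w \in s, w != p.1 & w != p.2].
apply: (iffP (tuple_count_gt0P #|V| P)).
  by case=> s /and4P[hs ws wu wv] _; exists s.
case=> s [hs ws wu wv]; exists s; first by rewrite /P hs ws wu wv.
exact: upath_size (shortest_upath hs).
Qed.

Lemma internal_shortest_path p w : internal p w ->
  exists m, shortest p.1 p.2 (p.1 :: rcons m p.2).
Proof.
case/internalP=> [[|x q] [hs ws wu _]]; first by [].
have /and4P[/eqP ex /eqP lq _ _] := shortest_upath hs; move: hs ws; rewrite ex.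
case/lastP: q lq => [<-|m z]; first by rewrite inE (negbTE wu).
by rewrite last_rcons => <- hs _; exists m.
Qed.

Lemma shortest_ends_neq u v m : shortest u v (u :: rcons m v) -> u != v.
Proof.
case/shortest_upath/and4P=> _ _ _.
by rewrite cons_uniq mem_rcons inE negb_or => /andP[/andP[]].
Qed.

Lemma fbc_ge0 w p : 0 <= fbc e wt w p.
Proof. by rewrite /fbc; case: ifP => // _; rewrite divr_ge0. Qed.

Lemma fbc_not_internal w p : ~~ internal p w -> fbc e wt w p = 0.
Proof. by rewrite /internal -eqn0Ngt /fbc => /eqP->; rewrite mul0r if_same. Qed.

Lemma shortest_same_side u v a w c y z : shortest u v (a ++ w :: c) ->
  y \in c -> z \in c -> y != z ->
  exists q, (shortest w z q /\ y \in q) \/ (shortest w y q /\ z \in q).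
Proof.
move=> hs yc /splitPr zc; case: zc yc hs => m r; rewrite mem_cat inE.
case/or3P=> [ym|/eqP->|yr] hs yz.
- exists (w :: rcons m z); left; split; last by rewrite inE mem_rcons inE ym !orbT.
  by move: hs; rewrite -[m ++ _]cat_rcons => /shortest_infix; rewrite last_rcons.
- by rewrite eqxx in yz.
- case/splitPr: yr hs => r1 r2 hs; exists (w :: rcons (m ++ z :: r1) y); right; split.
    move: hs; rewrite (_ : m ++ _ = rcons (m ++ z :: r1) y ++ r2).
      by move/shortest_infix; rewrite last_rcons.
    by rewrite cat_rcons -catA.
  by rewrite inE mem_rcons inE mem_cat inE eqxx !orbT.
Qed.

Lemma shattered_threshold_gt0 A a : shattered e wt A -> a \in A -> 0 < a.2.
Proof.
case=> _ [_ sh] aA; have [|w /(_ a aA)] := sh [::]; first by [].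
by rewrite in_nil => /esym/negbT; rewrite -ltNge; apply: le_lt_trans (fbc_ge0 _ _).
Qed.

Section UniqueShortestPaths.
Hypothesis unique_sp : unique_shortest_paths.

Lemma internal_inner p m y :
  shortest p.1 p.2 (p.1 :: rcons m p.2) -> internal p y = (y \in m).
Proof.
move=> hs; have /and4P[_ _ _] := shortest_upath hs.
rewrite cons_uniq rcons_uniq mem_rcons inE negb_or => /and3P[/andP[uv u_m] v_m _].
apply/internalP/idP => [[s [hs' ys yu yv]]|ym].
  by move: ys; rewrite (unique_sp uv hs' hs) inE mem_rcons inE (negbTE yu) (negbTE yv).
exists (p.1 :: rcons m p.2); split=> //; first by rewrite inE mem_rcons inE ym !orbT.
  by apply: contraNneq u_m => <-.
by apply: contraNneq v_m => <-.
Qed.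

Lemma fbc_internal w p : internal p w -> fbc e wt w p = 1.
Proof.
move=> pw; have [m hs] := internal_shortest_path pw.
have uv := shortest_ends_neq hs; have wm : w \in m by rewrite -(internal_inner _ hs).
have [_ [_ _ wu wv]] := internalP _ _ pw.
have via_eq : sigma_via e wt p.1 p.2 w = sigma e wt p.1 p.2.
  apply: eq_bigr => n _; apply: eq_card => t; rewrite !inE.
  have [ht|//] := boolP (shortest _ _ t).
  by rewrite (unique_sp uv ht hs) inE mem_rcons inE wm !orbT wu wv.
have sigma_gt0 : (0 < sigma e wt p.1 p.2)%N.
  apply/tuple_count_gt0P; exists (p.1 :: rcons m p.2) => //.
  exact: upath_size (shortest_upath hs).
by rewrite /fbc via_eq eqn0Ngt sigma_gt0 /= divff // pnatr_eq0 -lt0n.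
Qed.

Lemma le_fbc_internal w p t : 0 < t <= 1 -> (t <= fbc e wt w p) = internal p w.
Proof.
case/andP=> t_gt0 t_le1; have [pw|pNw] := boolP (internal p w); first by rewrite fbc_internal.
by rewrite fbc_not_internal // leNgt t_gt0.
Qed.

Lemma shortest_infix_unique u v s1 x m z s2 q :
  shortest u v (s1 ++ x :: m ++ z :: s2) -> shortest x z q -> q = x :: rcons m z.
Proof.
rewrite -[m ++ _]cat_rcons => /shortest_infix; rewrite last_rcons => hs hq.
exact: unique_sp (shortest_ends_neq hs) hq hs.
Qed.

Lemma internal_between p x z q y : internal p x -> internal p z -> x != z ->
  shortest x z q -> y \in q -> internal p y.
Proof.
move=> px pz xz hq yq; have [m hs] := internal_shortest_path px.
rewrite !(internal_inner _ hs) in px pz *.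
case/splitPr: px hs pz => m1 m2 hs; rewrite mem_cat inE eq_sym (negbTE xz) /=.
case/orP=> zm; move: hs; case/splitPr: zm => m3 m4.
- rewrite -catA rcons_cat /= rcons_cat => /(shortest_infix_unique (s1 := _ :: _)).
  move=> /(_ _ (shortest_rev hq)) rev_q; move: yq; rewrite -mem_rev rev_q.
  by rewrite inE mem_rcons inE !(mem_cat, inE) => /or3P[]->; rewrite ?orbT.
- rewrite rcons_cat /= rcons_cat => /(shortest_infix_unique (s1 := _ :: _)).
  move=> /(_ _ hq) q_eq; move: yq; rewrite q_eq.
  by rewrite inE mem_rcons inE !(mem_cat, inE) => /or3P[]->; rewrite ?orbT.
Qed.

Lemma internal_neq r a b : internal r a -> ~~ internal r b -> a != b.
Proof. by move=> ra; apply: contraNneq => <-. Qed.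

Section Crossing.
Variables (p p' : V * V) (w x y : V).
Hypotheses (pw : internal p w) (p'w : internal p' w).
Hypotheses (px : internal p x) (p'Nx : ~~ internal p' x).
Hypotheses (p'y : internal p' y) (pNy : ~~ internal p y).

(* Whichever of x and y comes first after w lies on the shortest path from w to the other,
   hence inside the path of p' (if it is x) or of p (if it is y). *)
Lemma crossing_not_after u v a c :
  shortest u v (a ++ w :: c) -> x \in c -> y \in c -> False.
Proof.
move=> hs xc yc.
have [q [[hq xq]|[hq yq]]] := shortest_same_side hs xc yc (internal_neq px pNy).
  by move: p'Nx; rewrite (internal_between p'w p'y (internal_neq pw pNy) hq xq).
by move: pNy; rewrite (internal_between pw px (internal_neq p'w p'Nx) hq yq).
Qed.

Lemma crossing_sides u v a c : shortest u v (a ++ w :: c) ->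
  x \in a ++ c -> y \in a ++ c -> (x \in c) != (y \in c).
Proof.
move=> hs; rewrite !mem_cat; case xc: (x \in c); case yc: (y \in c); rewrite ?orbT ?orbF //.
  by move=> _ _; case: (crossing_not_after hs xc yc).
move=> xa ya; have := shortest_rev hs; rewrite rev_cat rev_cons cat_rcons.
by move/crossing_not_after; rewrite !mem_rev => /(_ xa ya).
Qed.

End Crossing.

(* Pigeonhole: two of x 1, x 2, x 3 lie on the same side of w along the path of P 0. *)
Lemma internal_not_shatter4 (P : 'I_4 -> V * V) w (x : 'I_4 -> V) :
  (forall i, internal (P i) w) -> (forall i k, internal (P i) (x k) = (i != k)) -> False.
Proof.
move=> Pw Px; have [m hs] := internal_shortest_path (Pw ord0).
have x_m k : k != ord0 -> x k \in m by move=> k0; rewrite -(internal_inner _ hs) Px eq_sym.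
have xw k : x k != w by rewrite eq_sym (internal_neq (Pw k)) // Px eqxx.
have /splitPr wm : w \in m by rewrite -(internal_inner _ hs).
case: wm hs x_m => a c; set u := (P ord0).1; set v := (P ord0).2.
rewrite rcons_cat /= -[u :: _]/((u :: a) ++ _) => hs x_m.
have x_sides k : k != ord0 -> x k \in (u :: a) ++ rcons c v.
  move/x_m; rewrite !(mem_cat, inE, mem_rcons) (negbTE (xw k)) /=.
  by case/orP=> ->; rewrite ?orbT.
have sides k l : k != ord0 -> l != ord0 -> k != l ->
    (x k \in rcons c v) != (x l \in rcons c v).
  move=> k0 l0 kl.
  apply: (crossing_sides (Pw l) (Pw k) _ _ _ _ hs (x_sides k k0) (x_sides l l0));
    by rewrite Px ?eqxx // eq_sym.
have := sides 1 2 isT isT isT; have := sides 1 3 isT isT isT; have := sides 2 3 isT isT isT.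
by case: (x 1 \in _); case: (x 2 \in _); case: (x 3 \in _).
Qed.

Lemma shattered_internal A : shattered e wt A ->
  forall S : seq ((V * V) * R), {subset S <= A} ->
  exists w, forall a, a \in A -> (a \in S) = internal a.1 w.
Proof.
move=> shA S SA; have [_ [dA sh]] := shA; have [w Sw] := sh S SA.
exists w => a aA; rewrite Sw // le_fbc_internal //.
by have [_ /andP[_ ->]] := dA a aA; rewrite andbT (shattered_threshold_gt0 shA aA).
Qed.

Lemma pdim_le3_of_unique : pdim_le e wt 3.
Proof.
move=> A shA; rewrite leqNgt; apply/negP => size_A; have [uniq_A _] := shA.
have d : (V * V) * R by case: A size_A {shA uniq_A} => [|d].
pose pt (i : 'I_4) := nth d A i.
have ptA i : pt i \in A by apply/mem_nth/(leq_trans (ltn_ord i)).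
have pt_inj : injective pt.
  by move=> i j /eqP; rewrite nth_uniq ?(leq_trans (ltn_ord _) size_A) // => /eqP/val_inj.
have image_sub (P : pred 'I_4) : {subset image pt P <= A} by move=> a /imageP[i _ ->].
have [w Pw] := shattered_internal shA (image_sub predT).
have x_ex (k : 'I_4) : exists x, forall a, a \in A ->
    (a \in image pt (predC1 k)) = internal a.1 x.
  by case: (shattered_internal shA (image_sub (predC1 k))) => w0 H; exists w0.
have [x Px] := fin_all_exists x_ex.
apply: (internal_not_shatter4 (P := fun i => (pt i).1) (w := w) (x := x)) => [i|i k].
  by rewrite -Pw // mem_image.
by rewrite -Px // mem_image // inE.
Qed.

End UniqueShortestPaths.

End ShortestPaths.

Theorem theorem7 (R : realFieldType) (V : finType) (e : rel V)
    (wt : V -> V -> R)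
    (e_sym : symmetric e) (e_irr : irreflexive e)
    (wt_sym : forall x y, wt x y = wt y x)
    (wt_ge0 : forall x y, 0 <= wt x y)
    (us vs : V) (huv : us != vs)
    (hA : (sigma e wt us vs <= 2)%N)
    (hB : forall u v : V, u != v -> (u, v) != (us, vs) ->
            (sigma e wt u v <= 1)%N) :
  pdim_le e wt 3.
Proof.
apply: pdim_le3_of_unique => //.
exact: unique_shortest_paths_from_sigma huv hB.
Qed.
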